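(* Let $\mathcal{D}$ be an abstract system of proof notations, $s\in\mathbb{N}$, and let $d\in\mathcal{D}$ be $s$-bounded in $\mathcal{D}$. Then $\mathsf Ed$ is $o(d)\cdot(s+2)$-bounded in $\mathbb{E}(\mathcal{D})$, and $\mathsf E\mathsf Ed$ is $2^{o(d)}\cdot o(d)\cdot(s+4)$-bounded in $\mathbb{E}(\mathcal{D})$.
   Context: An abstract system of proof notations is a set $\mathcal{D}$ with functions $|\cdot|,o(\cdot)\colon\mathcal{D}\to\mathbb{N}\setminus\{0\}$ (size and height) and a relation $\to\subseteq\mathcal{D}\times\mathcal{D}$ such that $d\to d'$ implies $o(d')<o(d)$. The cut-elimination closure $\mathbb{E}(\mathcal{D})$ is the abstract system of formal terms inductively generated by: every $d\in\mathcal{D}$ is in $\mathbb{E}(\mathcal{D})$ (with size and height inherited); if $d,e\in\mathbb{E}(\mathcal{D})$ then $\mathsf{I}d,\ \mathsf{R}de,\ \mathsf{E}d\in\mathbb{E}(\mathcal{D})$ ($\mathsf I,\mathsf R,\mathsf E$ new symbols), with $|\mathsf Id|=|d|+1$, $|\mathsf Rde|=|d|+|e|+1$, $|\mathsf Ed|=|d|+1$, $o(\mathsf Id)=o(d)$, $o(\mathsf Rde)=o(d)+o(e)$, $o(\mathsf Ed)=2^{o(d)}-1$. The relation $\to$ on $\mathbb{E}(\mathcal{D})$ is inductively generated by: $d\to d'$ in $\mathcal{D}$ implies $d\to d'$; $d\to d'$ implies $\mathsf Id\to\mathsf Id'$; $e\to e'$ implies $\mathsf Rde\to\mathsf Rde'$;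 $d\to d'$ implies $\mathsf Ed\to\mathsf Ed'$; $\mathsf Rde\to\mathsf Id$ always; and $d\to d'$ together with $d\to d''$ implies $\mathsf Ed\to\mathsf R(\mathsf Ed')(\mathsf Ed'')$. For an abstract system $\mathcal{X}$ (here $\mathcal{D}$ or $\mathbb{E}(\mathcal{D})$) and $x\in\mathcal{X}$, $x$ is called $t$-bounded in $\mathcal{X}$ if every $x'\in\mathcal{X}$ with $x\to^\ast x'$ (reflexive transitive closure of the relation $\to$ of $\mathcal{X}$) satisfies $|x'|\le t$. *)

From Stdlib Require Import Arith Relations.

Set Implicit Arguments.

(** An abstract system of proof notations: a set D with size |.| and height o(.)
    valued in N \ {0}, and a relation -> such that d -> d' implies o(d') < o(d). *)
Record APN := {
  carrier :> Type;
  size : carrier -> nat;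
  height : carrier -> nat;
  step : carrier -> carrier -> Prop;
  size_pos : forall d, 0 < size d;
  height_pos : forall d, 0 < height d;
  step_height : forall d d', step d d' -> height d' < height d
}.

Inductive ETerm (D : APN) : Type :=
| Base : carrier D -> ETerm D
| I : ETerm D -> ETerm D
| R : ETerm D -> ETerm D -> ETerm D
| E : ETerm D -> ETerm D.

Arguments Base {D} _.
Arguments I {D} _.
Arguments R {D} _ _.
Arguments E {D} _.

Fixpoint Esize (D : APN) (x : ETerm D) : nat :=
  match x with
  | Base d => size D d
  | I d => Esize d + 1
  | R d e => Esize d + Esize e + 1
  | E d => Esize d + 1
  end.

Fixpoint Eheight (D : APN) (x : ETerm D) : nat :=
  match x with
  | Base d => height D d
  | I d => Eheight d
  | R d e => Eheight d + Eheight e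
  | E d => 2 ^ Eheight d - 1
  end.

Inductive Estep (D : APN) : ETerm D -> ETerm D -> Prop :=
| Estep_base : forall d d', step D d d' -> Estep (Base d) (Base d')
| Estep_I : forall d d', Estep d d' -> Estep (I d) (I d')
| Estep_R : forall d e e', Estep e e' -> Estep (R d e) (R d e')
| Estep_E : forall d d', Estep d d' -> Estep (E d) (E d')
| Estep_RI : forall d e, Estep (R d e) (I d)
| Estep_ER : forall d d' d'', Estep d d' -> Estep d d'' ->
    Estep (E d) (R (E d') (E d'')).

Definition bounded (D : APN) (t : nat) (d : carrier D) : Prop :=
  forall d', clos_refl_trans (carrier D) (step D) d d' -> size D d' <= t.

Definition Ebounded (D : APN) (t : nat) (x : ETerm D) : Prop :=
  forall x', clos_refl_trans (ETerm D) (@Estep D) x x' -> Esize x' <= t.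

(* Heights strictly decrease along reductions, so every reduct of [E y] is a
   "spine" [R (E y1) (R (E y2) ... (E yk))] (possibly behind some [I]'s) in
   which each [yi] is a reduct of [y] and the length of the spine is at most
   [o(y)]: the rule [E d -> R (E d') (E d'')] lengthens the spine by one but
   lowers the height bound of its last component by one.  Each link costs at
   most [s + 2] symbols, whence [Esize < o(y) * (s + 2)].  The two bounds follow
   by applying this once to [d] and once more to [E d], of height [2^o(d) - 1]. *)
From Stdlib Require Import Arith Relations Lia.
Set Implicit Arguments.

Lemma clos_rt_invariant (A : Type) (r : relation A) (P : A -> Prop) :
  (forall x y, r x y -> P x -> P y) ->
  forall x y, clos_refl_trans A r x y -> P x -> P y.
Proof.
  intros Hstep x y Hxy. apply clos_rt_rt1n_iff in Hxy.
  induction Hxy as [|x z y Hxz _ IH]; eauto.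
Qed.

Section Closure.
Variable D : APN.

Lemma Eheight_pos (x : ETerm D) : 0 < Eheight x.
Proof.
  induction x as [d| | |x IH]; simpl; try lia.
  - apply height_pos.
  - pose proof (Nat.pow_lt_mono_r 2 0 (Eheight x) ltac:(lia) IH). simpl in *. lia.
Qed.

Lemma Estep_height (x y : ETerm D) : Estep x y -> Eheight y < Eheight x.
Proof.
  pose proof (fun n => Nat.pow_le_mono_r 2 0 n ltac:(lia) ltac:(lia)) as Hpow_pos.
  simpl in Hpow_pos.
  induction 1 as [d d' Hd| | | d d' _ IH | d e | d d' d'' _ IH' _ IH'']; simpl.
  - apply step_height; assumption.
  - assumption.
  - lia.
  - pose proof (Nat.pow_lt_mono_r 2 _ _ ltac:(lia) IH).
    pose proof (Hpow_pos (Eheight d')). lia.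
  - pose proof (Eheight_pos e). lia.
  - destruct (Eheight d) as [|k]; [lia|].
    rewrite Nat.pow_succ_r'.
    pose proof (Nat.pow_le_mono_r 2 (Eheight d') k ltac:(lia) ltac:(lia)).
    pose proof (Nat.pow_le_mono_r 2 (Eheight d'') k ltac:(lia) ltac:(lia)).
    pose proof (Hpow_pos (Eheight d')). pose proof (Hpow_pos (Eheight d'')). lia.
Qed.

Lemma Ebounded_step (t : nat) (x y : ETerm D) :
  Ebounded t x -> Estep x y -> Ebounded t y.
Proof.
  intros Hx Hxy z Hyz. apply Hx. exact (rt_trans _ _ _ _ _ (rt_step _ _ _ _ Hxy) Hyz).
Qed.

Lemma Ebounded_le (t u : nat) (x : ETerm D) : t <= u -> Ebounded t x -> Ebounded u x.
Proof. intros Htu Hx z Hz. specialize (Hx z Hz). lia. Qed.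

Lemma Ebounded_Base (t : nat) (d : carrier D) : bounded D t d -> Ebounded t (Base d).
Proof.
  intros Hd x Hx.
  assert (Hreduct : exists d', x = Base d' /\ clos_refl_trans _ (step D) d d').
  { apply (@clos_rt_invariant _ (@Estep D)
             (fun x => exists d', x = Base d' /\ clos_refl_trans _ (step D) d d'))
      with (Base d); [|exact Hx|exists d; split; [reflexivity|apply rt_refl]].
    intros y z Hyz [d0 [-> Hd0]].
    inversion Hyz as [? d1 Hd01| | | | |]; subst.
    exists d1. split; [reflexivity|exact (rt_trans _ _ _ _ _ Hd0 (rt_step _ _ _ _ Hd01))]. }
  destruct Hreduct as [d' [-> Hdd']]. exact (Hd d' Hdd').
Qed.

Inductive Espine (t : nat) : nat -> ETerm D -> Prop :=
| Espine_E h y : Ebounded t y -> Eheight y <= h -> Espine t h (E y)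
| Espine_R h y z : Ebounded t y -> Eheight y <= h -> Espine t h z ->
    Espine t (S h) (R (E y) z)
| Espine_I h z : Espine t h z -> Espine t (S h) (I z).

Lemma Espine_step (t h : nat) (x y : ETerm D) :
  Espine t h x -> Estep x y -> Espine t h y.
Proof.
  intros Hx. revert y.
  induction Hx as [h y Hy Hyh|h y z Hy Hyh Hz IH|h z Hz IH];
    intros x' Hst; inversion Hst as [| | |? y' Hy'|? ?|? y' y'' Hy' Hy'']; subst.
  - pose proof (Estep_height Hy').
    apply Espine_E; [exact (Ebounded_step Hy Hy')|lia].
  - pose proof (Estep_height Hy'). pose proof (Estep_height Hy'').
    pose proof (Eheight_pos y').
    destruct h as [|h]; [lia|].
    apply Espine_R; [exact (Ebounded_step Hy Hy')|lia|].
    apply Espine_E; [exact (Ebounded_step Hy Hy'')|lia].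
  - apply Espine_R; auto.
  - apply Espine_I, Espine_E; assumption.
  - apply Espine_I; auto.
Qed.

Lemma Espine_size (t h : nat) (x : ETerm D) : Espine t h x -> Esize x < h * (t + 2).
Proof.
  induction 1 as [h y Hy Hyh|h y z Hy _ _ IH|h z _ IH]; simpl.
  - pose proof (Hy y (rt_refl _ _ _)). pose proof (Eheight_pos y). nia.
  - pose proof (Hy y (rt_refl _ _ _)). lia.
  - lia.
Qed.

Lemma Ebounded_E (t : nat) (y : ETerm D) :
  Ebounded t y -> Ebounded (Eheight y * (t + 2)) (E y).
Proof.
  intros Hy x Hx.
  assert (Hspine : Espine t (Eheight y) x).
  { apply (@clos_rt_invariant _ (@Estep D) (Espine t (Eheight y))) with (E y);
      [|exact Hx|apply Espine_E; auto].
    intros x1 x2 Hst Hsp. exact (Espine_step Hsp Hst). }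
  pose proof (Espine_size Hspine). lia.
Qed.

End Closure.

Theorem mainTheorem7 (D : APN) (s : nat) (d : carrier D) :
  bounded D s d ->
  Ebounded (height D d * (s + 2)) (E (Base d)) /\
  Ebounded (2 ^ height D d * height D d * (s + 4)) (E (E (Base d))).
Proof.
  intros Hd.
  pose proof (Ebounded_E (Ebounded_Base Hd)) as HE. simpl in HE.
  split; [exact HE|].
  refine (Ebounded_le _ (Ebounded_E HE)). simpl.
  pose proof (height_pos D d).
  set (h := height D d) in *. set (p := 2 ^ h).
  replace (p * h * (s + 4)) with (p * (h * (s + 4))) by lia.
  apply Nat.mul_le_mono; nia.
Qed.
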